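(* For every integer $t\ge1$, $C_5[E_{2t-1}]\rightarrow(K_{t,t},K_{t,t})^v$; consequently $F_v(K_{t,t},K_{t,t};3)\le 10t-5$.
   Context: All graphs are finite and simple. $E_s$ is the edgeless graph on $s$ vertices, $C_5$ the 5-cycle, $K_{t,t}$ the complete bipartite graph with parts of size $t$. The lexicographic product $G[H]$ has vertex set $V(G)\times V(H)$, with $\{(u_1,v_1),(u_2,v_2)\}$ an edge iff $\{u_1,u_2\}\in E(G)$, or $u_1=u_2$ and $\{v_1,v_2\}\in E(H)$. ''A graph $F$ contains $H$'' means $F$ has a (not necessarily induced) subgraph isomorphic to $H$. $G\rightarrow(H_1,H_2)^v$ means: for every partition $V(G)=X_1\cup X_2$ there is $i$ such that the subgraph induced by $X_i$ contains $H_i$. $F_v(H_1,H_2;k)$ is the minimum number of vertices of a $K_k$-free graph $G$ with $G\rightarrow(H_1,H_2)^v$. *)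

From mathcomp Require Import all_boot.
Set Implicit Arguments. Unset Strict Implicit. Unset Printing Implicit Defensive.

Record sgraph := SGraph {
  vert :> finType;
  adj : rel vert;
  adj_sym : symmetric adj;
  adj_irr : irreflexive adj }.

Definition contains_in (F : sgraph) (X : {set F}) (H : sgraph) : Prop :=
  exists f : H -> F, injective f /\ (forall x, f x \in X) /\
    (forall x y, adj x y -> adj (f x) (f y)).

Definition contains (F H : sgraph) : Prop := contains_in [set: F] H.

Definition varrows (G H1 H2 : sgraph) : Prop :=
  forall X : {set G}, contains_in X H1 \/ contains_in (~: X) H2.

Lemma K_sym k : symmetric (fun i j : 'I_k => i != j).
Proof. by move=> i j; rewrite eq_sym. Qed.
Lemma K_irr k : irreflexive (fun i j : 'I_k => i != j).
Proof. by move=> i; rewrite eqxx. Qed.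
Definition Kn (k : nat) : sgraph := SGraph (@K_sym k) (@K_irr k).

Lemma E_sym s : symmetric (fun i j : 'I_s => false). Proof. by []. Qed.
Lemma E_irr s : irreflexive (fun i j : 'I_s => false). Proof. by []. Qed.
Definition En (s : nat) : sgraph := SGraph (@E_sym s) (@E_irr s).

Definition C5adj (i j : 'I_5) : bool :=
  (j == (i.+1 %% 5) :> nat) || (i == (j.+1 %% 5) :> nat).
Lemma C5_sym : symmetric C5adj. Proof. by move=> i j; rewrite /C5adj orbC. Qed.
Lemma C5_irr : irreflexive C5adj. Proof. by case=> [[|[|[|[|[|]]]]] ?]. Qed.
Definition C5 : sgraph := SGraph C5_sym C5_irr.

Definition Kttadj t (x y : bool * 'I_t) : bool := x.1 != y.1.
Lemma Ktt_sym t : symmetric (@Kttadj t). Proof. by move=> x y; rewrite /Kttadj eq_sym. Qed.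
Lemma Ktt_irr t : irreflexive (@Kttadj t). Proof. by move=> x; rewrite /Kttadj eqxx. Qed.
Definition Ktt (t : nat) : sgraph := SGraph (@Ktt_sym t) (@Ktt_irr t).

Definition lexadj (G H : sgraph) (x y : G * H) : bool :=
  adj x.1 y.1 || ((x.1 == y.1) && adj x.2 y.2).
Lemma lex_sym G H : symmetric (@lexadj G H).
Proof. by move=> x y; rewrite /lexadj adj_sym [y.1 == _]eq_sym [adj y.2 _]adj_sym. Qed.
Lemma lex_irr G H : irreflexive (@lexadj G H).
Proof. by move=> x; rewrite /lexadj !adj_irr andbF. Qed.
Definition lexprod (G H : sgraph) : sgraph := SGraph (@lex_sym G H) (@lex_irr G H).

(* "F_v(H1,H2;k) <= n": some K_k-free graph on at most n vertices arrows (H1,H2)^v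
   (equivalent to min <= n). *)
Definition Fv_le (H1 H2 : sgraph) (k n : nat) : Prop :=
  exists G : sgraph, #|G| <= n /\ ~ contains G (Kn k) /\ varrows G H1 H2.

From mathcomp Require Import all_boot.
From mathcomp Require Import zify.

Set Implicit Arguments. Unset Strict Implicit. Unset Printing Implicit Defensive.

(* Given X in a lexicographic product G[H], colour each vertex u of G by whether the fibre of X over u has at least t
   elements. Since G has no proper 2-colouring, some edge uv is monochromatic:
   either both fibres over u and v meet X in t vertices, or (as a fibre has
   2t-1 vertices) both meet the complement of X in t vertices. Two such
   t-sets over adjacent vertices span a K_{t,t}. With G = C_5 the product
   G[E_{2t-1}] has 5(2t-1) vertices and is triangle-free, because C_5 is. *)

Definition not_2colourable (G : sgraph) : Prop :=
  forall c : G -> bool, exists u v : G, adj u v && (c u == c v).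

Definition triangle_free (G : sgraph) : Prop :=
  forall a b c : G, adj a b -> adj b c -> adj a c -> False.

Definition fibre (G H : sgraph) (Y : {set lexprod G H}) (u : G) : {set H} :=
  [set y | ((u, y) : lexprod G H) \in Y].

Lemma fibreC (G H : sgraph) (Y : {set lexprod G H}) (u : G) :
  fibre (~: Y) u = ~: fibre Y u.
Proof. by apply/setP => y; rewrite !inE. Qed.

Lemma exists_inj_ord_in (T : finType) (A : {set T}) (t : nat) : t <= #|A| ->
  exists g : 'I_t -> T, injective g /\ forall k, g k \in A.
Proof.
move=> tA; exists (fun k => enum_val (widen_ord tA k)); split.
  by move=> x y /enum_val_inj /(congr1 val) xy; apply: val_inj.
by move=> k; apply: enum_valP.
Qed.

Lemma leq_cardsC (T : finType) (A : {set T}) (t : nat) :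
  #|A| < t -> 2 * t <= #|T| + 1 -> t <= #|~: A|.
Proof. by have := cardsC A; lia. Qed.

Lemma contains_Ktt_adjacent_fibres (G H : sgraph) (Y : {set lexprod G H})
    (u v : G) (t : nat) :
  adj u v -> t <= #|fibre Y u| -> t <= #|fibre Y v| -> contains_in Y (Ktt t).
Proof.
move=> uv /exists_inj_ord_in [g [g_inj gY]] /exists_inj_ord_in [h [h_inj hY]].
have vu : v != u by apply: contraTneq uv => ->; rewrite adj_irr.
exists (fun x : bool * 'I_t =>
  if x.1 then ((v, h x.2) : lexprod G H) else (u, g x.2)).
split; last split.
- move=> [[] x] [[] y] /= [].
  + by move=> /h_inj ->.
  + by move=> /eqP; rewrite (negPf vu).
  + by move=> /eqP; rewrite eq_sym (negPf vu).
  + by move=> /g_inj ->.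
- by move=> [[] x] /=; [have := hY x | have := gY x]; rewrite inE.
- by move=> [[] x] [[] y] //= _; rewrite /lexadj /= ?uv // adj_sym uv.
Qed.

Lemma lexprod_varrows_Ktt (G H : sgraph) (t : nat) :
  not_2colourable G -> 2 * t <= #|H| + 1 ->
  varrows (lexprod G H) (Ktt t) (Ktt t).
Proof.
move=> G_odd H_big X.
have [u [v /andP [uv /eqP same_colour]]] := G_odd (fun w => t <= #|fibre X w|).
case: (leqP t #|fibre X u|) => Xu.
  by left; apply: (contains_Ktt_adjacent_fibres uv); rewrite -?same_colour.
have Xv : #|fibre X v| < t by rewrite ltnNge -same_colour -ltnNge.
by right; apply: (contains_Ktt_adjacent_fibres uv); rewrite fibreC leq_cardsC.
Qed.

Lemma triangle_free_K3_free (G : sgraph) :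
  triangle_free G -> ~ contains G (Kn 3).
Proof.
move=> G_tri [f [_ [_ f_adj]]].
exact: (G_tri _ _ _ (f_adj (@Ordinal 3 0 isT) (@Ordinal 3 1 isT) isT)
  (f_adj (@Ordinal 3 1 isT) (@Ordinal 3 2 isT) isT)
  (f_adj (@Ordinal 3 0 isT) (@Ordinal 3 2 isT) isT)).
Qed.

Lemma triangle_free_lexprod_En (G : sgraph) (s : nat) :
  triangle_free G -> triangle_free (lexprod G (En s)).
Proof. by move=> G_tri a b c; rewrite /= /lexadj /= !andbF !orbF; apply: G_tri. Qed.

Lemma C5adj_ordS (i : 'I_5) : C5adj i (ordS i).
Proof. by rewrite /C5adj eqxx. Qed.

(* A proper 2-colouring would flip colour five times around the cycle. *)
Lemma C5_not_2colourable : not_2colourable C5.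
Proof.
move=> c; have [i c_i|alt] := pickP (fun i => c i == c (ordS i)).
  by exists i, (ordS i); rewrite c_i andbT; apply: C5adj_ordS.
have flip i : c (ordS i) = ~~ c i.
  by have := alt i; case: (c i); case: (c (ordS i)).
have cycle5 : iter 5 (@ordS 5) ord0 = ord0 by apply: val_inj.
by have := congr1 c cycle5; rewrite /= !flip; case: (c ord0).
Qed.

Lemma C5_triangle_free : triangle_free C5.
Proof.
by case=> [[|[|[|[|[|a]]]]] ?] //; case=> [[|[|[|[|[|b]]]]] ?] //;
  case=> [[|[|[|[|[|c]]]]] ?].
Qed.

Theorem mainTheorem8 (t : nat) : 1 <= t ->
  varrows (lexprod C5 (En (2 * t - 1))) (Ktt t) (Ktt t) /\
  Fv_le (Ktt t) (Ktt t) 3 (10 * t - 5).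
Proof.
move=> t_pos.
have arrows : varrows (lexprod C5 (En (2 * t - 1))) (Ktt t) (Ktt t).
  by apply: lexprod_varrows_Ktt C5_not_2colourable _; rewrite card_ord; lia.
split=> //; exists (lexprod C5 (En (2 * t - 1))); split; last split=> //.
  by rewrite card_prod !card_ord; lia.
exact/triangle_free_K3_free/triangle_free_lexprod_En/C5_triangle_free.
Qed.
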